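(* Let $\Gamma\subseteq\mathrm{Aff}(\mathbb{R}^n)$ be an $n$-dimensional crystallographic group whose subgroup of pure translations is exactly $\mathbb{Z}^n$, with holonomy group $F$, and let $D\in N_{\mathrm{GL}_n(\mathbb{Z})}(F)$. Then the set $\{R(\varphi)\mid\varphi\in\mathrm{Aut}(\Gamma)\text{ with }\varphi|_{\mathbb{Z}^n}=D\}$ is finite.
   Context: $\mathrm{Aff}(\mathbb{R}^n)=\mathbb{R}^n\rtimes\mathrm{GL}_n(\mathbb{R})$ with multiplication $(d_1,D_1)(d_2,D_2)=(d_1+D_1d_2,D_1D_2)$. An $n$-dimensional crystallographic group is a discrete cocompact subgroup of $\mathbb{R}^n\rtimes O(n)$; here it is realised inside $\mathrm{Aff}(\mathbb{R}^n)$ such that $\Gamma\cap\mathbb{R}^n=\{(z,I_n)\mid z\in\mathbb{Z}^n\}$, identified with $\mathbb{Z}^n$. The holonomy group is $F=\{A\mid\exists a:\ (a,A)\in\Gamma\}\subseteq\mathrm{GL}_n(\mathbb{Z})$ (finite), and $N_{\mathrm{GL}_n(\mathbb{Z})}(F)$ is its normaliser in $\mathrm{GL}_n(\mathbb{Z})$. Every automorphism $\varphi$ of $\Gamma$ restricts to an automorphism of $\mathbb{Z}^n$, i.e. a matrix in $\mathrm{GL}_n(\mathbb{Z})$. For an automorphism $\varphi$, $R(\varphi)\in\{1,2,\dots\}\cup\{\infty\}$ is the number of classes of the equivalence relation $g\sim g'\iff\exists h\in\Gamma: g=hg'\varphi(h)^{-1}$ (Reidemeister number). *)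

From HB Require Import structures.
From mathcomp Require Import all_boot all_order all_algebra.
From mathcomp Require Import all_classical all_reals all_analysis.
Import numFieldNormedType.Exports.
Set Implicit Arguments. Unset Strict Implicit. Unset Printing Implicit Defensive.
Import Order.TTheory GRing.Theory Num.Theory.
Local Open Scope classical_set_scope.
Local Open Scope ring_scope.

(* An element (d, D) of R^n x M_n(R); it lies in Aff(R^n) when D is
   invertible.  Carries the product topology of the matrix topologies. *)
Notation aff R n := ('cV[R]_n * 'M[R]_n)%type.

Section Affine.
Variables (R : realType) (n : nat).
Local Notation aff := (aff R n).

Definition aff_one : aff := (0, 1%:M).
Definition aff_mul (g h : aff) : aff := (g.1 + g.2 *m h.1, g.2 *m h.2).
Definition aff_inv (g : aff) : aff := (- (invmx g.2 *m g.1), invmx g.2).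
Definition trans (z : 'cV[R]_n) : aff := (z, 1%:M).

Definition Aff : set aff := [set g | g.2 \in unitmx].

Definition Isom : set aff := [set g | g.2^T *m g.2 = 1%:M].

Definition is_subgroup (G : set aff) : Prop :=
  [/\ G aff_one,
      (forall g h, G g -> G h -> G (aff_mul g h)) &
      (forall g, G g -> G (aff_inv g))].

Definition discrete_subgroup (G : set aff) : Prop :=
  exists U : set aff, nbhs aff_one U /\ (G `&` U `<=` [set aff_one]).

Definition cocompact_in_Isom (G : set aff) : Prop :=
  exists C : set aff, [/\ compact C, C `<=` Isom &
    forall g, Isom g -> exists c, exists2 h, C c /\ G h & g = aff_mul c h].

Definition crystallographic (G : set aff) : Prop :=
  [/\ is_subgroup G, G `<=` Isom, discrete_subgroup G & cocompact_in_Isom G].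

(* Gamma <= Aff(R^n) "realised" as a crystallographic group: it is a subgroup
   of Aff(R^n) conjugate (inside Aff(R^n)) to a crystallographic group. *)
Definition realised_crystallographic (G : set aff) : Prop :=
  [/\ is_subgroup G, G `<=` Aff &
      exists2 a : aff, Aff a &
        crystallographic [set aff_mul (aff_mul a g) (aff_inv a) | g in G]].

Definition int_col (z : 'cV[R]_n) : Prop := forall i j, z i j \is a Num.int.
Definition int_mx (A : 'M[R]_n) : Prop := forall i j, A i j \is a Num.int.

Definition translations_Zn (G : set aff) : Prop :=
  forall z, G (trans z) <-> int_col z.

Definition holonomy (G : set aff) : set 'M[R]_n :=
  [set A | exists a, G (a, A)].

Definition GLnZ : set 'M[R]_n :=
  [set D | [/\ D \in unitmx, int_mx D & int_mx (invmx D)]].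

Definition normaliser_GLnZ (F : set 'M[R]_n) : set 'M[R]_n :=
  [set D | GLnZ D /\ [set D *m A *m invmx D | A in F] = F].

(* automorphisms of G (represented by functions on aff; only their values
   on G matter) *)
Definition is_aut (G : set aff) (phi : aff -> aff) : Prop :=
  [/\ (forall g, G g -> G (phi g)),
      (forall g h, G g -> G h -> phi (aff_mul g h) = aff_mul (phi g) (phi h)),
      (forall g h, G g -> G h -> phi g = phi h -> g = h) &
      (forall h, G h -> exists2 g, G g & phi g = h)].

Definition restricts_to (phi : aff -> aff) (D : 'M[R]_n) : Prop :=
  forall z, int_col z -> phi (trans z) = trans (D *m z).

Definition twisted_conj (G : set aff) (phi : aff -> aff) (g g' : aff) : Prop :=
  exists2 h, G h & g = aff_mul (aff_mul h g') (aff_inv (phi h)).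

Definition reid_classes (G : set aff) (phi : aff -> aff) : set (set aff) :=
  [set [set g' | G g' /\ twisted_conj G phi g g'] | g in G].

(* R(phi) = r, where r : option nat, Some k = k, None = infinity *)
Definition reidemeister_is (G : set aff) (phi : aff -> aff) (r : option nat)
  : Prop :=
  match r with
  | Some k => (reid_classes G phi #= `I_k)%card
  | None => infinite_set (reid_classes G phi)
  end.

Definition reidemeister_spectrum_D (G : set aff) (D : 'M[R]_n)
  : set (option nat) :=
  [set r | exists phi, [/\ is_aut G phi, restricts_to phi D &
                           reidemeister_is G phi r]].

End Affine.

From HB Require Import structures.
From mathcomp Require Import all_boot all_order all_algebra.
From mathcomp Require Import all_classical all_reals all_analysis.
Set Implicit Arguments. Unset Strict Implicit. Unset Printing Implicit Defensive.
Import Order.TTheory GRing.Theory Num.Theory.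
Local Open Scope classical_set_scope.
Local Open Scope ring_scope.
Local Open Scope card_scope.

(* Let x ≈ y mean that x = t_z y t_(Dz)^-1 for an integral translation t_z;
   this relation on Γ does not involve φ.  For every automorphism φ
   restricting to D, φ-twisted conjugacy is coarser than ≈, so
   R(φ) <= #(Γ/≈).  Conversely, the holonomy is finite (it consists of integer
   matrices conjugate to orthogonal ones), so Γ = Z^n S for a finite set S of
   coset representatives; writing h = t s with t in Z^n, s in S shows that
   every Reidemeister class is the union of at most |S| classes of ≈.  Hence
   Γ/≈ is finite as soon as some R(φ) is, and then bounds every finite R(φ). *)

Section RelationClasses.
Variables (T : choiceType) (X : set T).

Definition rel_classes (r : T -> T -> Prop) : set (set T) :=
  [set [set y | X y /\ r x y] | x in X].

Lemma rel_class_eq (r : T -> T -> Prop) x y :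
  (forall x y, r x y -> r y x) -> (forall x y z, r x y -> r y z -> r x z) ->
  r x y -> [set z | X z /\ r x z] = [set z | X z /\ r y z].
Proof.
move=> rC rT rxy; apply/seteqP; split=> z [Xz rz]; split=> //.
  exact: rT (rC _ _ rxy) rz.
exact: rT rxy rz.
Qed.

Lemma card_rel_classes_le (r r' : T -> T -> Prop) :
  (forall x, X x -> r x x) -> (forall x y, r x y -> r' x y) ->
  (forall x y z, r' x y -> r' y z -> r' x z) ->
  rel_classes r' #<= rel_classes r.
Proof.
move=> r1 rr' r'T.
pose coarsen c := [set y | X y /\ exists2 x, c x & r' x y].
suff sub : rel_classes r' `<=` coarsen @` rel_classes r.
  exact: card_le_trans (subset_card_le sub) (card_image_le _ _).
move=> _ [x Xx <-]; exists [set y | X y /\ r x y]; first by exists x.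
apply/seteqP; split=> y [Xy].
  by move=> [x' [_ rxx'] r'x'y]; split=> //; exact: r'T (rr' _ _ rxx') r'x'y.
by move=> r'xy; split=> //; exists x => //; split=> //; exact: r1.
Qed.

Lemma finite_rel_classes_refine (U : Type) (S : set U) (act : U -> T -> T)
    (r r' : T -> T -> Prop) :
  (forall x, X x -> r' x x) ->
  (forall x y, r x y -> r y x) -> (forall x y z, r x y -> r y z -> r x z) ->
  (forall x y, X y -> r' y x -> exists2 s, S s & r y (act s x)) ->
  finite_set S -> finite_set (rel_classes r') -> finite_set (rel_classes r).
Proof.
move=> r'1 rC rT refine finS finr'.
have [[x0 _]|noX] := pselect (exists x, X x); last first.
  apply: (sub_finite_set _ (finite_set0 _)) => c [x Xx _].
  by case: noX; exists x.
pose f p := [set z | X z /\ r (act p.2 (xget x0 p.1)) z].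
apply: (sub_finite_set _ (finite_image f (finite_setX finr' finS))).
move=> _ [y Xy <-].
set c := [set z | X z /\ r' y z].
have [Xx r'yx] : c (xget x0 c) by apply: xgetI (conj Xy (r'1 _ Xy)).
have [s Ss rys] := refine _ _ Xy r'yx.
exists (c, s); first by split=> //; exists y.
exact/esym/rel_class_eq.
Qed.

End RelationClasses.

Section EntrywiseL1Norm.
Variable R : numDomainType.

Definition mxl1 m n (M : 'M[R]_(m, n)) : R := \sum_i \sum_j `|M i j|.

Lemma ler_sum_term (I : finType) (F : I -> R) i :
  (forall j, 0 <= F j) -> F i <= \sum_j F j.
Proof.
by move=> F0; rewrite (bigD1 i) //= lerDl; apply: sumr_ge0 => j _.
Qed.

Lemma mxl1_ge0 m n (M : 'M[R]_(m, n)) : 0 <= mxl1 M.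
Proof. by apply: sumr_ge0 => i _; apply: sumr_ge0. Qed.

Lemma ler_mxl1 m n (M : 'M[R]_(m, n)) i j : `|M i j| <= mxl1 M.
Proof.
apply: (@le_trans _ _ (\sum_j `|M i j|)); first exact: ler_sum_term.
apply: (ler_sum_term (F := fun i => \sum_(j < n) `|M i j|)) => i'.
exact: sumr_ge0.
Qed.

Lemma mxl1M m n p (X : 'M[R]_(m, n)) (Y : 'M[R]_(n, p)) :
  mxl1 (X *m Y) <= mxl1 X * mxl1 Y.
Proof.
rewrite /mxl1 mulr_suml; apply: ler_sum => i _.
apply: (@le_trans _ _ (\sum_j \sum_k `|X i k| * `|Y k j|)).
  apply: ler_sum => j _; rewrite mxE.
  apply: le_trans (ler_norm_sum _ _ _) _.
  by apply: ler_sum => k _; rewrite normrM.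
rewrite exchange_big mulr_suml; apply: ler_sum => k _.
rewrite -mulr_sumr; apply: ler_wpM2l => //.
apply: (ler_sum_term (F := fun k => \sum_(j < p) `|Y k j|)) => k'.
exact: sumr_ge0.
Qed.

End EntrywiseL1Norm.

Lemma orthogonal_entry_le1 (R : realDomainType) n (O : 'M[R]_n) i j :
  O^T *m O = 1%:M -> `|O i j| <= 1.
Proof.
move=> orthO.
have colj : \sum_k O k j ^+ 2 = 1.
  have := congr1 (fun M : 'M[R]_n => M j j) orthO.
  rewrite !mxE eqxx mulr1n => <-.
  by apply: eq_bigr => k _; rewrite mxE.
rewrite -(@expr_le1 _ 2) // real_normK ?num_real // -colj.
by apply: (ler_sum_term (F := fun k => O k j ^+ 2)) => k; apply: sqr_ge0.
Qed.

Lemma mxl1_orthogonal (R : realDomainType) n (O : 'M[R]_n) :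
  O^T *m O = 1%:M -> mxl1 O <= (n * n)%:R.
Proof.
move=> orthO; apply: (@le_trans _ _ (\sum_(i < n) \sum_(j < n) (1 : R))).
  by apply: ler_sum => i _; apply: ler_sum => j _; apply: orthogonal_entry_le1.
by rewrite !sumr_const !card_ord -mulrnA.
Qed.

Lemma finite_bounded_int_mx (R : archiRealDomainType) m n (B : R) :
  finite_set [set A : 'M[R]_(m, n) |
    (forall i j, A i j \is a Num.int) /\ forall i j, `|A i j| <= B].
Proof.
pose K := Num.truncn B.
pose f (p : 'M['I_K.+1]_(m, n) * 'M[bool]_(m, n)) : 'M[R]_(m, n) :=
  \matrix_(i, j) ((-1) ^+ p.2 i j * (p.1 i j : nat)%:R).
apply: (sub_finite_set _ (finite_image f (@finite_finset _ setT))).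
move=> A [intA boundA].
exists (\matrix_(i, j) inord (Num.truncn `|A i j|), \matrix_(i, j) (A i j < 0))
  => //.
apply/matrixP => i j; rewrite /f !mxE inordK; last first.
  rewrite ltnS truncn_le_nat (le_lt_trans (boundA i j)) //.
  exact: truncnS_gt.
by rewrite truncnK ?natr_norm_int // mulr_sign_norm.
Qed.

Section AffineGroup.
Variables (R : realType) (n : nat).
Implicit Types (g h k : aff R n) (z w : 'cV[R]_n).
Local Notation "g ** h" := (aff_mul g h) (at level 40, left associativity).
Local Notation one := (aff_one R n).
Local Notation Aff := (@Aff R n).

Lemma aff_mulA g h k : g ** h ** k = g ** (h ** k).
Proof. by rewrite /aff_mul /= mulmxDr !mulmxA addrA. Qed.

Lemma aff_mul1g g : one ** g = g.
Proof. by case: g => a A; rewrite /aff_mul /= !mul1mx add0r. Qed.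

Lemma aff_mulg1 g : g ** one = g.
Proof. by case: g => a A; rewrite /aff_mul /= mulmx0 addr0 mulmx1. Qed.

Lemma aff_mulVg g : Aff g -> aff_inv g ** g = one.
Proof. by move=> Ag; rewrite /aff_mul /= mulVmx // addrC subrr. Qed.

Lemma aff_mulgV g : Aff g -> g ** aff_inv g = one.
Proof.
by move=> Ag; rewrite /aff_mul /= mulmxN mulmxA mulmxV // mul1mx subrr.
Qed.

Lemma Aff_mul g h : Aff g -> Aff h -> Aff (g ** h).
Proof. by rewrite /Aff /= unitmx_mul => -> ->. Qed.

Lemma aff_mulKg g h : Aff g -> aff_inv g ** (g ** h) = h.
Proof. by move=> Ag; rewrite -aff_mulA aff_mulVg // aff_mul1g. Qed.

Lemma aff_mulgK g h : Aff h -> g ** h ** aff_inv h = g.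
Proof. by move=> Ah; rewrite aff_mulA aff_mulgV // aff_mulg1. Qed.

Lemma aff_mulgKV g h : Aff h -> g ** aff_inv h ** h = g.
Proof. by move=> Ah; rewrite aff_mulA aff_mulVg // aff_mulg1. Qed.

Lemma aff_inv_uniq g h : Aff g -> g ** h = one -> h = aff_inv g.
Proof. by move=> Ag gh1; rewrite -(aff_mulKg h Ag) gh1 aff_mulg1. Qed.

Lemma aff_invM g h :
  Aff g -> Aff h -> aff_inv (g ** h) = aff_inv h ** aff_inv g.
Proof.
move=> Ag Ah; apply/esym/aff_inv_uniq; first exact: Aff_mul.
by rewrite -aff_mulA aff_mulgK // aff_mulgV.
Qed.

Lemma aff_inv1 : aff_inv one = one.
Proof. by rewrite /aff_inv /= invmx1 mulmx0 oppr0. Qed.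

Lemma trans_mul z w : trans z ** trans w = trans (z + w).
Proof. by rewrite /aff_mul /= mul1mx mulmx1. Qed.

Lemma trans_inv z : aff_inv (trans z) = trans (- z).
Proof. by rewrite /aff_inv /= invmx1 mul1mx. Qed.

Lemma Aff_trans z : Aff (trans z).
Proof. exact: unitmx1. Qed.

Lemma aff_eq_trans g : g.2 = 1%:M -> g = trans g.1.
Proof. by case: g => a A /= ->. Qed.

Lemma aff_conj_trans g z :
  Aff g -> g ** trans z ** aff_inv g = trans (g.2 *m z).
Proof.
move=> Ag; rewrite /aff_mul /aff_inv /trans /= mulmx1 mulmxV //.
by rewrite mulmxN mulmxA mulmxV // mul1mx addrAC subrr add0r.
Qed.

Definition twist (psi : aff R n -> aff R n) h g := h ** g ** aff_inv (psi h).

Section TwistedConjugacy.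
Variables (H : set (aff R n)) (psi : aff R n -> aff R n).
Hypotheses (H_subgroup : is_subgroup H) (H_Aff : H `<=` Aff).
Hypothesis psi_Aff : forall h, H h -> Aff (psi h).
Hypothesis psiM : forall g h, H g -> H h -> psi (g ** h) = psi g ** psi h.

Lemma psi1 : psi one = one.
Proof.
have [H1 _ _] := H_subgroup.
have psi11 : psi one = psi one ** psi one by rewrite -psiM // aff_mul1g.
by rewrite -[LHS](aff_mulgK _ (psi_Aff H1)) -psi11 aff_mulgV //; apply: psi_Aff.
Qed.

Lemma twist1 g : twist psi one g = g.
Proof. by rewrite /twist psi1 aff_inv1 aff_mul1g aff_mulg1. Qed.

Lemma twistM h k g : H h -> H k ->
  twist psi (h ** k) g = twist psi h (twist psi k g).
Proof.
by move=> Hh Hk; rewrite /twist psiM // aff_invM ?aff_mulA //; apply: psi_Aff.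
Qed.

Lemma twisted_conj_refl g : twisted_conj H psi g g.
Proof. by have [H1 _ _] := H_subgroup; exists one => //; exact/esym/twist1. Qed.

Lemma twisted_conj_sym g g' :
  twisted_conj H psi g g' -> twisted_conj H psi g' g.
Proof.
have [_ _ HV] := H_subgroup; move=> -[h Hh ->].
exists (aff_inv h); first exact: HV.
rewrite -/(twist psi (aff_inv h) (twist psi h g')).
rewrite -twistM ?aff_mulVg ?twist1 //.
  exact: H_Aff.
exact: HV.
Qed.

Lemma twisted_conj_trans g g' g'' :
  twisted_conj H psi g g' -> twisted_conj H psi g' g'' ->
  twisted_conj H psi g g''.
Proof.
have [_ HM _] := H_subgroup; move=> -[h Hh ->] [k Hk ->].
by exists (h ** k); [exact: HM | rewrite -/(twist psi (h ** k) g'') twistM].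
Qed.

End TwistedConjugacy.

Definition lattice : set (aff R n) := [set trans z | z in @int_col R n].

Definition trans_map (D : 'M[R]_n) g := trans (D *m g.1).

Lemma lattice_subgroup : is_subgroup lattice.
Proof.
split; first by exists 0 => // i j; rewrite mxE rpred0.
  move=> _ _ [z Zz <-] [w Zw <-]; rewrite trans_mul.
  by exists (z + w) => // i j; rewrite mxE rpredD.
move=> _ [z Zz <-]; rewrite trans_inv.
by exists (- z) => // i j; rewrite mxE rpredN.
Qed.

Lemma lattice_Aff : lattice `<=` Aff.
Proof. by move=> _ [z _ <-]; apply: Aff_trans. Qed.

Lemma trans_mapM D g h : lattice g -> lattice h ->
  trans_map D (g ** h) = trans_map D g ** trans_map D h.
Proof.
by move=> [z _ <-] [w _ <-]; rewrite /trans_map trans_mul mulmxDr trans_mul.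
Qed.

End AffineGroup.

Arguments lattice {R n}.
Arguments lattice_subgroup {R n}.
Arguments lattice_Aff {R n}.

Section TranslationLattice.
Variables (R : realType) (n : nat) (G : set (aff R n)).
Local Notation Aff := (@Aff R n).
Hypotheses (G_subgroup : is_subgroup G) (G_Aff : G `<=` Aff).
Hypothesis G_Zn : translations_Zn G.
Local Notation "g ** h" := (aff_mul g h) (at level 40, left associativity).

Lemma lattice_sub : lattice `<=` G.
Proof. by move=> _ [z Zz <-]; apply/G_Zn. Qed.

Lemma int_col_holonomy g z : G g -> int_col z -> int_col (g.2 *m z).
Proof.
move=> Gg Zz; have [_ GM GV] := G_subgroup; apply/G_Zn.
rewrite -aff_conj_trans; last exact: G_Aff.
by apply: (GM _ _ (GM _ _ Gg _) (GV _ Gg)); apply/G_Zn.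
Qed.

Lemma holonomy_int_mx A : holonomy G A -> int_mx A.
Proof.
move=> [a GaA] i j.
have Zdelta : int_col (delta_mx j 0 : 'cV[R]_n).
  by move=> i' j'; rewrite mxE; case: (_ && _); [apply: rpred1 | apply: rpred0].
by have := int_col_holonomy GaA Zdelta i 0; rewrite -colE mxE.
Qed.

Lemma holonomy_snd g : G g -> holonomy G g.2.
Proof. by case: g => a A GaA; exists a. Qed.

Definition holonomy_rep A : aff R n := (xget 0 [set a | G (a, A)], A).

Lemma holonomy_rep_in A : holonomy G A -> G (holonomy_rep A).
Proof. by move=> [a GaA]; apply: (xgetI 0 (P := [set a | G (a, A)]) GaA). Qed.

Lemma lattice_holonomy_factor g :
  G g -> exists2 t, lattice t & g = t ** holonomy_rep g.2.
Proof.
move=> Gg; have [_ GM GV] := G_subgroup.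
have Grep := holonomy_rep_in (holonomy_snd Gg).
have Arep := G_Aff Grep.
set t := g ** aff_inv (holonomy_rep g.2).
have t2 : t.2 = 1%:M by rewrite /= mulmxV.
exists t; last by rewrite aff_mulgKV.
exists t.1; last by rewrite -aff_eq_trans.
by apply/G_Zn; rewrite -aff_eq_trans //; apply: GM (GV _ Grep).
Qed.

Section Automorphism.
Variables (phi : aff R n -> aff R n) (D : 'M[R]_n).
Hypotheses (phi_aut : is_aut G phi) (phi_D : restricts_to phi D).

Lemma phi_Aff g : G g -> Aff (phi g).
Proof. by move=> Gg; have [phiG _ _ _] := phi_aut; apply/G_Aff/phiG. Qed.

Lemma phiM g h : G g -> G h -> phi (g ** h) = phi g ** phi h.
Proof. by have [_ phiM _ _] := phi_aut; apply: phiM. Qed.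

Lemma phi_lattice t : lattice t -> phi t = trans_map D t.
Proof. by move=> [z Zz <-]; apply: phi_D. Qed.

Lemma twisted_conj_lattice_sub g g' :
  twisted_conj lattice (trans_map D) g g' -> twisted_conj G phi g g'.
Proof.
by move=> [t Lt ->]; exists t; [apply: lattice_sub | rewrite phi_lattice].
Qed.

Let trans_map_Aff t : lattice t -> Aff (trans_map D t) := fun _ => Aff_trans _.

Lemma card_reid_classes_le :
  reid_classes G phi #<= rel_classes G (twisted_conj lattice (trans_map D)).
Proof.
apply: card_rel_classes_le.
- move=> g _.
  exact: twisted_conj_refl lattice_subgroup trans_map_Aff (@trans_mapM _ _ D) g.
- exact: twisted_conj_lattice_sub.
- exact: twisted_conj_trans G_subgroup phi_Aff phiM.
Qed.

Lemma finite_lattice_classes : finite_set (holonomy G) ->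
  finite_set (reid_classes G phi) ->
  finite_set (rel_classes G (twisted_conj lattice (trans_map D))).
Proof.
apply: (finite_rel_classes_refine (act := fun A => twist phi (holonomy_rep A))).
- move=> g _; exact: twisted_conj_refl G_subgroup phi_Aff phiM g.
- exact: twisted_conj_sym lattice_subgroup lattice_Aff trans_map_Aff
    (@trans_mapM _ _ D).
- exact: twisted_conj_trans lattice_subgroup trans_map_Aff
    (@trans_mapM _ _ D).
move=> g _ _ [h Gh ->].
have [t Lt htr] := lattice_holonomy_factor Gh.
exists h.2; first exact: holonomy_snd.
exists t => //.
rewrite -/(twist phi h g) {1}htr (twistM phi_Aff phiM).
- by rewrite /twist (phi_lattice Lt).
- exact: lattice_sub.
- exact/holonomy_rep_in/holonomy_snd.
Qed.

End Automorphism.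
End TranslationLattice.

Lemma holonomy_bounded (R : realType) n (G : set (aff R n)) :
  realised_crystallographic G ->
  exists B : R, forall A, holonomy G A -> forall i j, `|A i j| <= B.
Proof.
move=> [_ _ [a Aa [_ conj_isom _ _]]]; set P := a.2.
exists (mxl1 (invmx P) * (n * n)%:R * mxl1 P) => A [c GcA] i j.
have orthO : (P *m A *m invmx P)^T *m (P *m A *m invmx P) = 1%:M.
  by apply: (conj_isom (aff_mul (aff_mul a (c, A)) (aff_inv a))); exists (c, A).
have -> : A = invmx P *m (P *m A *m invmx P) *m P.
  by rewrite !mulmxA mulVmx // mul1mx mulmxKV.
apply: le_trans (ler_mxl1 _ i j) _; apply: le_trans (mxl1M _ _) _.
apply: ler_wpM2r; first exact: mxl1_ge0.
apply: le_trans (mxl1M _ _) _; apply: ler_wpM2l; first exact: mxl1_ge0.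
exact: mxl1_orthogonal.
Qed.

Lemma finite_holonomy (R : realType) n (G : set (aff R n)) :
  realised_crystallographic G -> translations_Zn G -> finite_set (holonomy G).
Proof.
move=> crystG G_Zn; have [B boundB] := holonomy_bounded crystG.
have [G_subgroup G_Aff _] := crystG.
apply: (sub_finite_set _ (finite_bounded_int_mx n n B)) => A holA; split.
  exact: holonomy_int_mx G_subgroup G_Aff G_Zn A holA.
exact: boundB.
Qed.

Lemma finite_card_bounded T (A : set T) :
  finite_set [set m : nat | finite_set A /\ `I_m #<= A].
Proof.
have [/finite_setP [N AN]|infA] := pselect (finite_set A); last first.
  by apply: (sub_finite_set _ (finite_set0 _)) => m [].
apply: (sub_finite_set _ (finite_II N.+1)) => m [_ mA] /=.
by rewrite ltnS -card_le_II -(card_le_eqr AN).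
Qed.

Theorem theorem5p5 (R : realType) (n : nat) (Gamma : set (aff R n))
  (D : 'M[R]_n) :
  realised_crystallographic Gamma ->
  translations_Zn Gamma ->
  normaliser_GLnZ (holonomy Gamma) D ->
  finite_set (reidemeister_spectrum_D Gamma D).
Proof.
move=> crystG G_Zn _; have finF := finite_holonomy crystG G_Zn.
have [G_subgroup G_Aff _] := crystG.
set Q := rel_classes Gamma (twisted_conj lattice (trans_map D)).
apply: (@sub_finite_set _ _
  ([set None] `|` Some @` [set m | finite_set Q /\ `I_m #<= Q])).
  move=> [m|] [phi [phi_aut phi_D reid]]; [right | by left].
  exists m => //; split.
    apply: (finite_lattice_classes G_subgroup G_Aff G_Zn phi_aut phi_D finF).
    by apply/finite_setP; exists m.
  by rewrite -(card_le_eql reid); exact: card_reid_classes_le.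
rewrite finite_setU; split; first exact: finite_set1.
exact/finite_image/finite_card_bounded.
Qed.
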